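(* Let the system have Hilbert-space dimension $d$. Let $\mathcal G$ be a set of unitary gates, containing the identity, that is universal (every unitary on the $d$-dimensional space is a limit of finite products of elements of $\mathcal G$), and let $C_{\mathcal G}(U)=\min\{r\in\mathbb N: U=U_r\cdots U_1,\ U_j\in\mathcal G\}$ (infinite if no such finite product exists). Let $\mathcal P$ be a set of projectors containing $\mathbb 1$ and at least one rank-1 projector, and let $\mathcal M^r=\{U^\dagger PU: P\in\mathcal P,\ C_{\mathcal G}(U)\le r\}$, $\mathcal M^\infty=\overline{\bigcup_{r\ge0}\mathcal M^r}$. Let $\mathcal X=\{\log\operatorname{tr}P: P\in\mathcal P\}\subseteq[0,\log d]$ and $q=\sup\{b-a: (a,b)\subseteq[0,\log d]\setminus\mathcal X\}$. Then $\mathcal M^\infty$ is $q$-quasiuniversal with respect to $\mathbb 1$.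
   Context: Natural logarithms; POVM effect = operator $0\le Q\le\mathbb 1$; $\overline{\,\cdot\,}$ is topological closure. A set $\mathcal M^\infty$ of POVM effects is $q$-quasiuniversal with respect to a positive semidefinite $\Gamma$ if for every POVM effect $Q$ with $\|Q\|_\infty=1$ and every $g\in(0,1)$ there exist $\tilde Q,\tilde Q'\in\mathcal M^\infty$ with $g\tilde Q\le Q\le(1-g)\tilde Q'+g\mathbb 1$ and $\log\operatorname{tr}(\tilde Q'\Gamma)-\log\operatorname{tr}(\tilde Q\Gamma)\le q$. *)

From HB Require Import structures.
From mathcomp Require Import all_boot all_order all_algebra.
From mathcomp Require Import all_classical all_reals all_analysis.
From mathcomp.real_closed Require Import complex.
Set Implicit Arguments. Unset Strict Implicit. Unset Printing Implicit Defensive.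
Import Order.TTheory GRing.Theory Num.Theory.
Local Open Scope ring_scope.
Local Open Scope classical_set_scope.

Section Defs.
Variable R : realType.
Local Notation C := R[i].

Definition adj (m n : nat) (A : 'M[C]_(m, n)) : 'M[C]_(n, m) :=
  (map_mx (@conjc R) A)^T.

Definition unitary d (U : 'M[C]_d) : Prop := adj U *m U = 1%:M.

Definition projector d (P : 'M[C]_d) : Prop := P *m P = P /\ adj P = P.

(* positive semidefinite: Hermitian with nonnegative quadratic form
   (the order on C is the usual partial order: 0 <= z iff z is real and >= 0) *)
Definition psd d (A : 'M[C]_d) : Prop :=
  adj A = A /\ forall x : 'cV[C]_d, 0 <= (adj x *m A *m x) 0 0.

Definition loewner d (A B : 'M[C]_d) : Prop := psd (B - A).

Definition effect d (Q : 'M[C]_d) : Prop := psd Q /\ loewner Q 1%:M.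

Definition vnorm d (x : 'cV[C]_d) : R := Num.sqrt (complex.Re ((adj x *m x) 0 0)).

Definition opnorm d (Q : 'M[C]_d) : R :=
  sup [set vnorm (Q *m x) | x in [set x : 'cV[C]_d | vnorm x = 1]].

(* topological closure of a set of matrices (entrywise topology = any norm
   topology in finite dimension) *)
Definition mx_closure d (S : set 'M[C]_d) : set 'M[C]_d :=
  [set M | forall e : R, 0 < e ->
     exists2 N, S N & forall i j, `|M i j - N i j| < e%:C%C].

(* product U_r ... U_1 of a word [:: U_r; ...; U_1] *)
Definition wprod d (w : seq 'M[C]_d) : 'M[C]_d := foldr mulmx 1%:M w.

Definition cost_le d (G : set 'M[C]_d) (U : 'M[C]_d) (r : nat) : Prop :=
  exists w : seq 'M[C]_d, [/\ (size w <= r)%N, (forall V, V \in w -> G V) &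
                              U = wprod w].

Definition universal d (G : set 'M[C]_d) : Prop :=
  forall U, unitary U ->
    mx_closure [set wprod w | w in [set w : seq 'M[C]_d | forall V, V \in w -> G V]] U.

Definition Mr d (G : set 'M[C]_d) (Ps : set 'M[C]_d) (r : nat) : set 'M[C]_d :=
  [set M | exists P U, [/\ Ps P, cost_le G U r & M = adj U *m P *m U]].

Definition Minf d (G : set 'M[C]_d) (Ps : set 'M[C]_d) : set 'M[C]_d :=
  mx_closure (\bigcup_(r in [set: nat]) Mr G Ps r).

Definition logtr_set d (Ps : set 'M[C]_d) : set R :=
  [set ln (complex.Re (\tr P)) | P in Ps].

Definition gap d (Ps : set 'M[C]_d) : R :=
  sup [set z : R | exists a b : R, z = b - a /\ (forall x, a < x < b ->
          (0 <= x <= ln (d%:R : R)) /\ ~ logtr_set Ps x)].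

(* q-quasiuniversality w.r.t. Gamma.  log 0 = -oo in the paper, so the
   trace of tilde Q (in the subtracted log) must be positive. *)
Definition quasiuniversal d (q : R) (Minf : set 'M[C]_d) (Gamma : 'M[C]_d) : Prop :=
  forall Q, effect Q -> opnorm Q = 1 ->
  forall g : R, 0 < g < 1 ->
  exists Qt Qt', [/\ Minf Qt /\ Minf Qt',
     loewner (g%:C%C *: Qt) Q,
     loewner Q ((1 - g)%:C%C *: Qt' + g%:C%C *: 1%:M),
     0 < complex.Re (\tr (Qt *m Gamma)) &
     ln (complex.Re (\tr (Qt' *m Gamma))) - ln (complex.Re (\tr (Qt *m Gamma))) <= q].

End Defs.

From HB Require Import structures.
From mathcomp Require Import all_boot all_order all_algebra.
From mathcomp Require Import all_classical all_reals all_analysis.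
From mathcomp.real_closed Require Import complex.
From mathcomp Require Import fingroup perm.
From mathcomp.algebra_tactics Require Import ring lra.
Set Implicit Arguments. Unset Strict Implicit. Unset Printing Implicit Defensive.
Import Order.TTheory GRing.Theory Num.Theory.
Local Open Scope ring_scope.

(* Diagonalize Q = S^* diag(lam) S; then 0 <= lam <= 1, and ||Q|| = 1 forces the set L of
   eigenvalues >= g to be nonempty.  The ranks of the projectors in Ps include 1 and d, so |L|
   lies between two consecutive such ranks a <= |L| <= b.  Let Qt and Qt' project onto a
   eigenvectors inside L and onto b eigenvectors containing L: then g Qt <= Q <= (1-g) Qt' + g,
   and Qt, Qt' are unitary conjugates of projectors in Ps, hence lie in M^oo since conjugation
   is continuous and products of gates approximate every unitary.  Finally no log tr P lies
   strictly between log a and log b, so log b - log a <= q. *)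

Section Adjoint.
Variable R : realType.
Local Notation C := R[i].

Lemma conjcE (x : C) : conjc x = x^*.
Proof. by case: x. Qed.

Lemma adjE m n (A : 'M[C]_(m, n)) : adj A = map_mx Num.conj_op A^T.
Proof. by apply/matrixP => i j; rewrite !mxE conjcE. Qed.

Lemma adj_entry m n (A : 'M[C]_(m, n)) i j : adj A i j = (A j i)^*.
Proof. by rewrite adjE !mxE. Qed.

Lemma adjM m n p (A : 'M[C]_(m, n)) (B : 'M[C]_(n, p)) :
  adj (A *m B) = adj B *m adj A.
Proof. by rewrite !adjE trmx_mul map_mxM. Qed.

Lemma adjK m n (A : 'M[C]_(m, n)) : adj (adj A) = A.
Proof. by apply/matrixP => i j; rewrite !adj_entry conjCK. Qed.

Lemma adjB m n (A B : 'M[C]_(m, n)) : adj (A - B) = adj A - adj B.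
Proof. by apply/matrixP => i j; rewrite !adjE !mxE rmorphB. Qed.

Lemma adjmx1 n : adj (1%:M : 'M[C]_n) = 1%:M.
Proof. by rewrite /adj map_mx1 trmx1. Qed.

Lemma adj_diag n (v : 'rV[C]_n) :
  (forall i, v 0 i \is Num.real) -> adj (diag_mx v) = diag_mx v.
Proof.
move=> v_real; apply/matrixP => i j; rewrite adj_entry !mxE.
by case: (eqVneq i j) => [->|_]; rewrite ?mulr1n ?conj_Creal ?mulr0n ?conjC0.
Qed.

Lemma adj_perm_mx n (s : {perm 'I_n}) : adj (perm_mx s : 'M[C]_n) = perm_mx s^-1.
Proof. by rewrite adjE tr_perm_mx; apply/matrixP => i j; rewrite !mxE conjC_nat. Qed.

Lemma unitary_mulmx_adj n (U : 'M[C]_n) : unitary U -> U *m adj U = 1%:M.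
Proof. exact: mulmx1C. Qed.

Lemma unitary1 n : unitary (1%:M : 'M[C]_n).
Proof. by rewrite /unitary adjmx1 mulmx1. Qed.

Lemma unitary_adj n (U : 'M[C]_n) : unitary U -> unitary (adj U).
Proof. by move=> U_unitary; rewrite /unitary adjK unitary_mulmx_adj. Qed.

Lemma unitaryM n (U V : 'M[C]_n) : unitary U -> unitary V -> unitary (U *m V).
Proof.
by move=> U_unitary V_unitary; rewrite /unitary adjM mulmxA -(mulmxA _ (adj U)) U_unitary mulmx1.
Qed.

Lemma unitary_perm_mx n (s : {perm 'I_n}) : unitary (perm_mx s : 'M[C]_n).
Proof. by rewrite /unitary adj_perm_mx -perm_mxM mulVg perm_mx1. Qed.

End Adjoint.

Section UnitaryDiagonal.
Variables (R : realType) (n : nat).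
Local Notation C := R[i].
Implicit Types (S U : 'M[C]_n) (v w : 'rV[C]_n).

Definition udiag S v := adj S *m diag_mx v *m S.

Definition ind_row (B : {set 'I_n}) : 'rV[C]_n := \row_j (j \in B)%:R.

Lemma udiagD S v w : udiag S v + udiag S w = udiag S (v + w).
Proof. by rewrite /udiag linearD /= mulmxDr mulmxDl. Qed.

Lemma udiagB S v w : udiag S v - udiag S w = udiag S (v - w).
Proof. by rewrite /udiag linearB /= mulmxBr mulmxBl. Qed.

Lemma udiagZ S (a : C) v : a *: udiag S v = udiag S (a *: v).
Proof. by rewrite /udiag linearZ /= -scalemxAr -scalemxAl. Qed.

Lemma udiag_conj S U v : adj U *m udiag S v *m U = udiag (S *m U) v.
Proof. by rewrite /udiag adjM !mulmxA. Qed.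

Lemma psd_udiag S v : (forall i, 0 <= v 0 i) -> psd (udiag S v).
Proof.
move=> v_ge0; split.
  by rewrite /udiag !adjM adjK adj_diag ?mulmxA // => i; apply: ger0_real.
move=> x; rewrite /udiag -!mulmxA mulmxA -adjM mulmxA mul_mx_diag mxE.
apply: sumr_ge0 => i _; rewrite !mxE conjcE mulrAC.
by apply: mulr_ge0 => //; rewrite mulrC mul_conjC_ge0.
Qed.

Lemma loewner_udiag S v w :
  (forall i, v 0 i <= w 0 i) -> loewner (udiag S v) (udiag S w).
Proof.
by move=> vw; rewrite /loewner udiagB; apply: psd_udiag => i; rewrite !mxE subr_ge0.
Qed.

Lemma tr_udiag_ind S (B : {set 'I_n}) :
  unitary S -> complex.Re (\tr (udiag S (ind_row B))) = #|B|%:R.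
Proof.
move=> S_unitary; rewrite /udiag mxtrace_mulC mulmxA unitary_mulmx_adj // mul1mx.
rewrite mxtrace_diag (eq_bigr (fun j => if j \in B then 1 else 0)) => [|j _]; last first.
  by rewrite mxE; case: (j \in B).
by rewrite -big_mkcond /= sumr_const -(rmorph_nat (@real_complex R)).
Qed.

Lemma loewner_quad_Re (A B : 'M[C]_n) (x : 'cV[C]_n) : loewner A B ->
  complex.Re ((adj x *m A *m x) 0 0) <= complex.Re ((adj x *m B *m x) 0 0).
Proof.
move=> [_ /(_ x)]; rewrite mulmxBr mulmxBl !mxE lecE => /andP[_].
by case: ((adj x *m A *m x) 0 0) => a ?; case: ((adj x *m B *m x) 0 0) => b ? /=; lra.
Qed.

Lemma vnorm1_Re (x : 'cV[C]_n) : vnorm x = 1 -> complex.Re ((adj x *m x) 0 0) = 1.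
Proof.
have : 0 <= (adj x *m x) 0 0.
  by rewrite mxE; apply: sumr_ge0 => j _; rewrite adj_entry mulrC mul_conjC_ge0.
rewrite lecE => /andP[_ /= Re_ge0] /(congr1 (fun r => r ^+ 2)).
by rewrite sqr_sqrtr // expr1n.
Qed.

Section Unitary.
Variable S : 'M[C]_n.
Hypothesis S_unitary : unitary S.

Lemma udiag_const1 : udiag S (const_mx 1) = 1%:M.
Proof. by rewrite /udiag diag_const_mx mulmx1. Qed.

Lemma udiagM v w : udiag S v *m udiag S w = udiag S (\row_j (v 0 j * w 0 j)).
Proof.
rewrite /udiag -mulmx_diag !mulmxA; congr (_ *m _).
by rewrite -(mulmxA _ S) unitary_mulmx_adj // mulmx1.
Qed.

Lemma udiag_inj : injective (udiag S).
Proof.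
have diagE v : S *m udiag S v *m adj S = diag_mx v.
  by rewrite /udiag !mulmxA unitary_mulmx_adj // mul1mx -mulmxA unitary_mulmx_adj ?mulmx1.
move=> v w /(congr1 (fun A => S *m A *m adj S)); rewrite !diagE => /matrixP vw.
by apply/matrixP => i j; rewrite ord1; have := vw j j; rewrite !mxE eqxx !mulr1n.
Qed.

Lemma udiag_quad v i :
  let x : 'cV[C]_n := adj S *m delta_mx i 0 in (adj x *m udiag S v *m x) 0 0 = v 0 i.
Proof.
have adj_delta : adj (delta_mx i 0 : 'cV[C]_n) = (delta_mx 0 i : 'rV[C]_n).
  by apply/matrixP => a b; rewrite adj_entry !mxE conjC_nat andbC.
rewrite /= adjM adjK adj_delta /udiag !mulmxA -(mulmxA _ S) unitary_mulmx_adj //.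
rewrite mulmx1 -(mulmxA _ S) unitary_mulmx_adj // mulmx1.
by rewrite -rowE -colE !mxE eqxx mulr1n.
Qed.

Lemma effect_udiag_bounds v : effect (udiag S v) -> forall i, 0 <= v 0 i <= 1.
Proof.
move=> [[_ quad_ge0] [_ quad_le1]] i; apply/andP; split.
  by have := quad_ge0 (adj S *m delta_mx i 0); rewrite udiag_quad.
move: (quad_le1 (adj S *m delta_mx i 0)).
by rewrite -udiag_const1 udiagB udiag_quad !mxE subr_ge0.
Qed.

Lemma opnorm_udiag_le v (c : R) :
  0 <= c -> (forall i, 0 <= v 0 i <= c%:C%C) -> opnorm (udiag S v) <= c.
Proof.
move=> c_ge0 v_bd; set Q := udiag S v.
have Q_herm : adj Q = Q by have [] := psd_udiag S (fun i => (andP (v_bd i)).1).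
have Q2_le : loewner (Q *m Q) ((c ^+ 2)%:C%C *: 1%:M).
  rewrite udiagM -udiag_const1 udiagZ; apply: loewner_udiag => i.
  rewrite !mxE mulr1 rmorphXn expr2.
  by have /andP[v_ge0 v_le] := v_bd i; apply: ler_pM.
rewrite /opnorm; set E := (X in sup X).
have [->|/set0P E_neq0] := eqVneq E set0; first by rewrite sup0.
apply: ge_sup => // _ [x /= /vnorm1_Re x_Re <-].
rewrite -(ger0_norm c_ge0) -sqrtr_sqr; apply: ler_wsqrtr.
have -> : adj (Q *m x) *m (Q *m x) = adj x *m (Q *m Q) *m x.
  by rewrite adjM Q_herm !mulmxA.
apply: le_trans (loewner_quad_Re x Q2_le) _.
rewrite -scalemxAr mulmx1 -scalemxAl mxE.
by case: ((adj x *m x) 0 0) x_Re => a b /= ->; rewrite !mul0r subr0 mulr1.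
Qed.

Lemma effect_udiag_eig_ge v (g : R) : effect (udiag S v) ->
  opnorm (udiag S v) = 1 -> 0 < g < 1 -> exists i, g%:C%C <= v 0 i.
Proof.
move=> Q_effect Q_norm /andP[g_gt0 g_lt1]; apply: contrapT => no_big_eig.
suff : opnorm (udiag S v) <= g by rewrite Q_norm; lra.
apply: opnorm_udiag_le => [|i]; first exact: ltW.
have /andP[v_ge0 _] := effect_udiag_bounds Q_effect i.
have g_real : (g%:C%C : C) \is Num.real by apply: ger0_real; rewrite lecR ltW.
rewrite v_ge0 (real_leNgt (ger0_real v_ge0) g_real) /=.
by apply/negP => /ltW g_le; apply: no_big_eig; exists i.
Qed.

End Unitary.
End UnitaryDiagonal.

Arguments ind_row {R n} B.

Definition superlevel (R : realType) n (lam : 'rV[R[i]]_n) (g : R) : {set 'I_n} :=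
  [set i | g%:C%C <= lam 0 i].

Section Sandwich.
Variables (R : realType) (n : nat).
Local Notation C := R[i].
Variables (S : 'M[C]_n) (lam : 'rV[C]_n) (g : R).
Hypothesis lam_bd : forall i, 0 <= lam 0 i <= 1.

Lemma loewner_udiag_ind_lower (A : {set 'I_n}) :
  A \subset superlevel lam g -> loewner (g%:C%C *: udiag S (ind_row A)) (udiag S lam).
Proof.
move=> A_sub; rewrite udiagZ; apply: loewner_udiag => i; rewrite !mxE.
have /andP[lam_ge0 _] := lam_bd i.
case: (boolP (i \in A)) => [/(fintype.subsetP A_sub)|_]; last by rewrite mulr0.
by rewrite inE mulr1.
Qed.

Lemma loewner_udiag_ind_upper (A : {set 'I_n}) : 0 <= g -> unitary S ->
  superlevel lam g \subset A ->
  loewner (udiag S lam) ((1 - g)%:C%C *: udiag S (ind_row A) + g%:C%C *: 1%:M).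
Proof.
move=> g_ge0 S_unitary A_sup; rewrite -(udiag_const1 S_unitary) !udiagZ udiagD.
apply: loewner_udiag => i; rewrite !mxE mulr1; have /andP[lam_ge0 lam_le1] := lam_bd i.
case: (boolP (i \in A)) => [_|iA]; first by rewrite mulr1 rmorphB rmorph1 subrK.
have : i \notin superlevel lam g by apply: contra iA => /(fintype.subsetP A_sup).
by rewrite inE -real_ltNge ?ger0_real ?lecR // mulr0 add0r => /ltW.
Qed.

End Sandwich.

(* [s] sends the [k]-th entry of [enum A ++ enum (~: A)] to the [k]-th entry of
   [enum B ++ enum (~: B)]. *)
Lemma perm_of_card_eq (T : finType) (A B : {set T}) :
  #|A| = #|B| -> exists s : {perm T}, forall x, (s x \in B) = (x \in A).
Proof.
move=> card_AB.
pose sA := enum A ++ enum (~: A); pose sB := enum B ++ enum (~: B).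
have uniq_sB : uniq sB.
  by rewrite cat_uniq !enum_uniq andbT /=; apply/hasPn => x; rewrite !mem_enum inE.
have mem_sA x : x \in sA by rewrite mem_cat !mem_enum inE orbN.
have size_sA : size sA = #|T| by rewrite size_cat -!cardE cardsC.
have size_sB : size sB = #|T| by rewrite size_cat -!cardE cardsC.
pose f x := nth x sB (index x sA).
have index_lt x : (index x sA < #|T|)%N by rewrite -size_sA index_mem.
have f_inj : injective f.
  move=> x y; rewrite /f (set_nth_default y x) ?size_sB //.
  move/eqP; rewrite nth_uniq ?size_sB // => /eqP eq_index.
  by rewrite -(nth_index x (mem_sA x)) eq_index (set_nth_default y x) ?size_sA // nth_index.
exists (perm f_inj) => x; rewrite permE /f.
have -> : (x \in A) = (index x sA < #|A|)%N.
  rewrite /sA index_cat mem_enum; case: ifP => xA; first by rewrite cardE index_mem mem_enum xA.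
  by rewrite -cardE ltnNge leq_addr.
rewrite card_AB nth_cat -cardE; case: ifP => x_lt; first by rewrite -mem_enum mem_nth // -cardE.
have : (index x sA - #|B| < size (enum (~: B)))%N.
  by rewrite -cardE ltn_subLR ?cardsC // leqNgt x_lt.
by move=> /(mem_nth x); rewrite mem_enum inE => /negbTE ->.
Qed.

Lemma card_ord_lt n k : (k <= n)%N -> #|[set j : 'I_n | (j < k)%N]| = k.
Proof.
move=> k_le_n; have widen_inj : injective (widen_ord k_le_n).
  by move=> a b /(congr1 val) /= /val_inj.
suff -> : [set j : 'I_n | (j < k)%N] = widen_ord k_le_n @: [set: 'I_k].
  by rewrite card_imset // cardsT card_ord.
apply/setP => j; rewrite inE; apply/idP/imsetP => [jk|[a _ ->]] /=; last exact: ltn_ord.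
by exists (Ordinal jk); rewrite ?inE //; apply: val_inj.
Qed.

Lemma mxrank_unit_conj (F : fieldType) n (U X W : 'M[F]_n) :
  U \in unitmx -> W \in unitmx -> \rank (U *m X *m W) = \rank X.
Proof.
move=> U_unit W_unit; rewrite mxrankMfree ?row_free_unit //.
apply/eqP; rewrite eqn_leq mxrankM_maxr /=.
by rewrite -{1}(mulKmx U_unit X) mxrankM_maxr.
Qed.

Section Diagonalization.
Variables (R : realType) (n : nat).
Local Notation C := R[i].

Lemma hermitian_udiag (A : 'M[C]_n) :
  adj A = A -> exists S v, unitary S /\ A = udiag S v.
Proof.
move=> A_herm.
have /orthomx_spectralP : A \is normalmx by apply/eqP; rewrite -adjE A_herm.
have := spectral_unitarymx A.
set S := spectralmx A; set v := spectral_diag A => S_unitary A_eq.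
exists S, v; split.
  by apply: mulmx1C; move/unitarymxP: S_unitary; rewrite -adjE.
by rewrite /udiag {1}A_eq (invmx_unitary S_unitary) -adjE.
Qed.

Lemma projector_udiag (P : 'M[C]_n) :
  projector P -> exists V B, unitary V /\ P = udiag V (ind_row B).
Proof.
move=> [P_idem /hermitian_udiag [S [v [S_unitary P_eq]]]].
exists S, [set j | v 0 j == 1]; split => //; rewrite P_eq; congr udiag.
move: P_idem; rewrite P_eq (udiagM S_unitary) => /(udiag_inj S_unitary) /matrixP v_idem.
apply/matrixP => a j; rewrite ord1 !mxE inE.
have /eqP := v_idem 0 j; rewrite !mxE -subr_eq0 -[X in _ - X]mulr1 -mulrBr.
by rewrite mulf_eq0 subr_eq0 => /orP[] /eqP ->; rewrite ?eqxx // eq_sym oner_eq0.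
Qed.

Lemma diag_ind_perm (A B : {set 'I_n}) (s : {perm 'I_n}) :
  (forall x, (s x \in B) = (x \in A)) ->
  udiag (perm_mx s^-1) (ind_row B) = diag_mx (ind_row A) :> 'M[C]_n.
Proof.
move=> sAB; rewrite /udiag adj_perm_mx invgK -row_permE -col_permE.
by apply/matrixP => i j; rewrite !mxE sAB (inj_eq perm_inj).
Qed.

Lemma udiag_ind_conj (S V : 'M[C]_n) (A B : {set 'I_n}) :
  unitary S -> unitary V -> #|A| = #|B| ->
  exists2 U, unitary U & adj U *m udiag V (ind_row B) *m U = udiag S (ind_row A).
Proof.
move=> S_unitary V_unitary /perm_of_card_eq [s sAB].
exists (adj V *m perm_mx s^-1 *m S).
  by do 2?apply: unitaryM => //; [exact: unitary_adj|exact: unitary_perm_mx].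
rewrite udiag_conj !mulmxA unitary_mulmx_adj // mul1mx -udiag_conj.
by rewrite (diag_ind_perm sAB).
Qed.

Lemma rank_udiag_ind (V : 'M[C]_n) (B : {set 'I_n}) :
  unitary V -> \rank (udiag V (ind_row B)) = #|B|.
Proof.
move=> V_unitary.
have B_le_n : (#|B| <= n)%N by rewrite -[X in (_ <= X)%N]card_ord max_card.
have [U U_unitary U_conj] := udiag_ind_conj (unitary1 R n) V_unitary (card_ord_lt B_le_n).
have [adjU_unit U_unit] := mulmx1_unit U_unitary.
rewrite -(mxrank_unit_conj _ adjU_unit U_unit) U_conj /udiag adjmx1 mul1mx mulmx1.
suff -> : diag_mx (ind_row [set j : 'I_n | (j < #|B|)%N]) = pid_mx #|B| :> 'M[C]_n.
  by rewrite rank_pid_mx.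
apply/matrixP => i j; rewrite !mxE inE.
case: (eqVneq i j) => [->|i_neq_j]; first by rewrite !eqxx mulr1n.
by rewrite mulr0n (negbTE (i_neq_j : nat_of_ord i != j)).
Qed.

End Diagonalization.

Section EntryBounds.
Variable R : realType.
Local Notation C := R[i].

Definition mx_bounded m n (A : 'M[C]_(m, n)) (c : R) := forall i j, `|A i j| <= c%:C%C.

Lemma mx_bounded_le m n (A : 'M[C]_(m, n)) (a b : R) :
  a <= b -> mx_bounded A a -> mx_bounded A b.
Proof. by move=> ab A_bd i j; apply: le_trans (A_bd i j) _; rewrite lecR. Qed.

Lemma mx_bounded_exists m n (A : 'M[C]_(m, n)) : exists2 c, 0 <= c & mx_bounded A c.
Proof.
have norm_real (z : C) : `|z| = (complex.Re `|z|)%:C%C by rewrite RRe_real ?normr_real.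
have Re_norm_ge0 (z : C) : 0 <= complex.Re `|z|.
  by have := normr_ge0 z; rewrite lecE => /andP[_].
exists (\sum_i \sum_j complex.Re `|A i j|) => [|i j].
  by apply: sumr_ge0 => k _; apply: sumr_ge0.
rewrite norm_real lecR (bigD1 i) //= (bigD1 j) //= -addrA lerDl.
apply: addr_ge0; apply: sumr_ge0 => k _; last apply: sumr_ge0 => l _; exact: Re_norm_ge0.
Qed.

Lemma adj_bounded m n (A : 'M[C]_(m, n)) c : mx_bounded A c -> mx_bounded (adj A) c.
Proof. by move=> A_bd i j; rewrite adj_entry norm_conjC. Qed.

Lemma addmx_bounded m n (A B : 'M[C]_(m, n)) a b :
  mx_bounded A a -> mx_bounded B b -> mx_bounded (A + B) (a + b).
Proof.
move=> A_bd B_bd i j; rewrite mxE rmorphD /=.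
by apply: le_trans (ler_normD _ _) _; apply: lerD.
Qed.

Lemma mulmx_bounded m n p (A : 'M[C]_(m, n)) (B : 'M[C]_(n, p)) a b :
  mx_bounded A a -> mx_bounded B b -> mx_bounded (A *m B) (a * b *+ n).
Proof.
move=> A_bd B_bd i j; rewrite mxE rmorphMn rmorphM /=.
apply: le_trans (ler_norm_sum _ _ _) _.
rewrite -[X in _ <= X *+ _]mulr1 -[n in _ *+ n]card_ord -sumr_const.
apply: ler_sum => k _; rewrite mulr1 normrM.
by apply: ler_pM; rewrite ?normr_ge0.
Qed.

Lemma conj_mx_lipschitz n (U P : 'M[C]_n) : exists2 L : R, 0 <= L &
  forall (W : 'M[C]_n) (dl : R), 0 <= dl <= 1 -> mx_bounded (U - W) dl ->
    mx_bounded (adj U *m P *m U - adj W *m P *m W) (dl * L).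
Proof.
have [u u_ge0 U_bd] := mx_bounded_exists U; have [p p_ge0 P_bd] := mx_bounded_exists P.
exists ((p * u + (u + 1) * p) *+ (n * n)).
  by rewrite mulrn_wge0 // addr_ge0 ?mulr_ge0 ?addr_ge0.
move=> W dl /andP[dl_ge0 dl_le1] UW_bd.
have W_bd : mx_bounded W (u + 1).
  have -> : W = U + - (U - W) by rewrite opprB addrC subrK.
  apply: addmx_bounded => // i j; rewrite mxE normrN.
  by apply: le_trans (UW_bd i j) _; rewrite lecR.
have -> : adj U *m P *m U - adj W *m P *m W =
    adj (U - W) *m P *m U + adj W *m P *m (U - W).
  by rewrite adjB !mulmxBl mulmxBr addrA subrK.
apply: mx_bounded_le (addmx_bounded (mulmx_bounded (mulmx_bounded (adj_bounded UW_bd) P_bd) U_bd)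
  (mulmx_bounded (mulmx_bounded (adj_bounded W_bd) P_bd) UW_bd)).
rewrite !mulrnAl -!mulrnDl -mulrnA mulrnAr le_eqVlt; apply/orP; left.
by apply/eqP; congr (_ *+ _); ring.
Qed.

End EntryBounds.

Lemma Minf_unitary_conj (R : realType) n (G Ps : set 'M[R[i]]_n) (U P : 'M[R[i]]_n) :
  universal G -> Ps P -> unitary U -> Minf G Ps (adj U *m P *m U).
Proof.
move=> G_univ P_in U_unitary e e_gt0.
have [L L_ge0 conj_lip] := conj_mx_lipschitz U P.
have L1_gt0 : 0 < L + 1 by rewrite ltr_wpDl.
pose dl := Num.min 1 (e / (L + 1)).
have dl_gt0 : 0 < dl by rewrite lt_min ltr01 divr_gt0.
have dl_le1 : dl <= 1 by rewrite ge_min lexx.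
have dlL_lt_e : dl * L < e.
  have : dl * (L + 1) <= e by rewrite -ler_pdivlMr // ge_min lexx orbT.
  by rewrite mulrDr mulr1; lra.
have [N [w w_gates w_N] w_close] := G_univ U U_unitary dl dl_gt0.
rewrite -{}w_N {N} in w_close.
exists (adj (wprod w) *m P *m wprod w).
  by exists (size w) => //; exists P, (wprod w); split => //; exists w.
have UW_bd : mx_bounded (U - wprod w) dl by move=> a b; rewrite !mxE ltW.
have dl_in : 0 <= dl <= 1 by rewrite ltW.
move=> i j; have := conj_lip (wprod w) dl dl_in UW_bd i j; rewrite !mxE => conj_bd.
by apply: le_lt_trans conj_bd _; rewrite ltcR.
Qed.

Section Projectors.
Variables (R : realType) (n : nat).
Local Notation C := R[i].

Lemma projector_trace (P : 'M[C]_n) :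
  projector P -> complex.Re (\tr P) = (\rank P)%:R.
Proof.
move=> /projector_udiag [V [B [V_unitary ->]]].
by rewrite tr_udiag_ind // rank_udiag_ind.
Qed.

Lemma Minf_udiag_ind (G Ps : set 'M[C]_n) (P S : 'M[C]_n) (A : {set 'I_n}) :
  universal G -> Ps P -> projector P -> unitary S -> \rank P = #|A| ->
  Minf G Ps (udiag S (ind_row A)).
Proof.
move=> G_univ P_in /projector_udiag [V [B [V_unitary P_eq]]] S_unitary rank_P.
have [|U U_unitary <-] := udiag_ind_conj S_unitary V_unitary (A := A) (B := B).
  by rewrite -rank_P P_eq rank_udiag_ind.
by rewrite -P_eq; apply: Minf_unitary_conj.
Qed.

End Projectors.

Lemma subset_card (T : finType) (L : {set T}) k :
  (k <= #|L|)%N -> exists2 A : {set T}, A \subset L & #|A| = k.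
Proof.
move=> k_le; exists [set x in take k (enum L)].
  by apply/fintype.subsetP => x; rewrite inE => /mem_take; rewrite mem_enum.
rewrite cardsE (card_uniqP _) ?take_uniq ?enum_uniq //.
by rewrite size_takel // -cardE.
Qed.

Lemma superset_card (T : finType) (L : {set T}) k :
  (#|L| <= k)%N -> (k <= #|T|)%N -> exists2 A : {set T}, L \subset A & #|A| = k.
Proof.
move=> L_le k_le; have [X XLc cardX] : exists2 X : {set T}, X \subset ~: L & #|X| = (#|T| - k)%N.
  by apply: subset_card; rewrite -(cardsC L) leq_subLR leq_add2r.
exists (~: X); last by rewrite cardsCs finset.setCK cardX subKn.
by rewrite -finset.setCS finset.setCK.
Qed.

Lemma nat_bracket (K : nat -> Prop) lo hi m :
  K lo -> K hi -> (lo <= m <= hi)%N ->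
  exists a b, [/\ K a, K b, (lo <= a <= m)%N, (m <= b <= hi)%N &
                  forall k, K k -> (k <= a)%N \/ (b <= k)%N].
Proof.
move=> K_lo K_hi /andP[lo_m m_hi].
have ex_below : exists k, `[< K k >] && (k <= m)%N by exists lo; rewrite lo_m asboolT.
have ex_above : exists k, `[< K k >] && (m <= k)%N by exists hi; rewrite m_hi asboolT.
have below_m k : `[< K k >] && (k <= m)%N -> (k <= m)%N by case/andP.
have [a /andP[/asboolP K_a a_m] a_max] := ex_maxnP ex_below below_m.
have [b /andP[/asboolP K_b m_b] b_min] := ex_minnP ex_above.
exists a, b; split => //.
- by rewrite a_m andbT a_max // lo_m asboolT.
- by rewrite m_b b_min // m_hi asboolT.
move=> k K_k; case: (leqP k m) => [k_m|/ltnW m_k].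
  by left; rewrite a_max // k_m asboolT.
by right; rewrite b_min // m_k asboolT.
Qed.

Section Gap.
Variables (R : realType) (n : nat).
Local Notation C := R[i].
Variable Ps : set 'M[C]_n.

Lemma gap_ge (a b : R) : 0 <= a -> a <= b -> b <= ln (n%:R : R) ->
  (forall x, a < x < b -> ~ logtr_set Ps x) -> b - a <= gap Ps.
Proof.
move=> a_ge0 ab b_le Ps_out; rewrite /gap; set E := (X in sup X).
have E_ba : E (b - a).
  exists a, b; split => // x /andP[ax xb]; split; first by apply/andP; split; lra.
  by apply: Ps_out; rewrite ax xb.
apply: (sup_upper_bound _ E_ba); split; first by exists (b - a).
exists (ln n%:R) => _ [a' [b' [-> in_range]]]; rewrite leNgt; apply/negP => too_long.
pose eps := (b' - a' - ln n%:R) / 4.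
have eps4 : eps * 4 = b' - a' - ln n%:R by rewrite /eps divfK // pnatr_eq0.
have eps_gt0 : 0 < eps by rewrite /eps divr_gt0 //; lra.
have /in_range[/andP[x1_ge0 _] _] : a' < a' + eps < b' by apply/andP; split; lra.
have /in_range[/andP[_ x2_le] _] : a' < b' - eps < b' by apply/andP; split; lra.
lra.
Qed.

Lemma gap_ge_nat (a b : nat) : (0 < a)%N -> (a <= b <= n)%N ->
  (forall P, Ps P -> exists2 k : nat,
     complex.Re (\tr P) = k%:R & (k <= a)%N \/ (b <= k)%N) ->
  ln (b%:R : R) - ln a%:R <= gap Ps.
Proof.
move=> a_gt0 /andP[ab bn] Ps_out.
have ln_le (p q : nat) : (0 < p)%N -> (p <= q)%N -> ln (p%:R : R) <= ln q%:R.
  by move=> p_gt0 pq; rewrite ler_ln ?posrE ?ltr0n ?ler_nat // (leq_trans p_gt0 pq).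
have b_gt0 := leq_trans a_gt0 ab.
have ln_a_ge0 : 0 <= ln (a%:R : R) by apply: ln_ge0; rewrite ler1n.
apply: gap_ge => //; [exact: ln_le | exact: ln_le |].
move=> x /andP[ax xb] [P P_in]; have [k -> k_out] := Ps_out P P_in => x_eq.
rewrite -{}x_eq in ax xb; have [k0|k_gt0] := posnP k.
  by rewrite k0 mulr0n (@ln0 _ 0) // in ax; lra.
by case: k_out => [/(ln_le _ _ k_gt0)|/(ln_le _ _ b_gt0)]; lra.
Qed.

End Gap.

Local Open Scope classical_set_scope.

Theorem propositionI4 (R : realType) (d : nat) (G Ps : set 'M[R[i]]_d) :
  (0 < d)%N ->
  (forall U, G U -> unitary U) ->
  G 1%:M ->
  universal G ->
  (forall P, Ps P -> projector P) ->
  Ps 1%:M ->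
  (exists2 P, Ps P & \rank P = 1%N) ->
  quasiuniversal (gap Ps) (Minf G Ps) 1%:M.
Proof.
move=> d_gt0 _ _ G_univ Ps_proj Ps_1 rank1 Q Q_effect Q_norm g g_in.
have [S [lam [S_unitary Q_eq]]] := hermitian_udiag Q_effect.1.1.
rewrite {}Q_eq in Q_effect Q_norm *.
have lam_bd := effect_udiag_bounds S_unitary Q_effect.
set L := superlevel lam g.
have L_gt0 : (0 < #|L|)%N.
  have [i0 g_le] := effect_udiag_eig_ge S_unitary Q_effect Q_norm g_in.
  by apply/card_gt0P; exists i0; rewrite inE.
have L_le_d : (#|L| <= d)%N by rewrite -[X in (_ <= X)%N]card_ord max_card.
pose K k := exists2 P, Ps P & \rank P = k.
have K_d : K d by exists 1%:M; rewrite ?mxrank1.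
have [a [b [[Pa Pa_in rank_Pa] [Pb Pb_in rank_Pb] /andP[a_gt0 aL] /andP[Lb bd] K_out]]] :=
  nat_bracket rank1 K_d (introT andP (conj L_gt0 L_le_d)).
have [A AL card_A] := subset_card aL.
have [|A' LA' card_A'] := superset_card Lb; first by rewrite card_ord.
exists (udiag S (ind_row A)), (udiag S (ind_row A')); split.
- split.
    by apply: (Minf_udiag_ind G_univ Pa_in) => //; [exact: Ps_proj | rewrite card_A].
  by apply: (Minf_udiag_ind G_univ Pb_in) => //; [exact: Ps_proj | rewrite card_A'].
- exact: loewner_udiag_ind_lower.
- by apply: loewner_udiag_ind_upper => //; case/andP: g_in => /ltW.
- by rewrite mulmx1 tr_udiag_ind // card_A ltr0n.
rewrite !mulmx1 !tr_udiag_ind // card_A card_A'.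
apply: gap_ge_nat => [//||P P_in]; first by rewrite (leq_trans aL Lb).
exists (\rank P); first exact: projector_trace (Ps_proj P P_in).
by apply: K_out; exists P.
Qed.
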